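(* Let $H$ be a graph with $\chi(H)=r\geq 3$ and $\gcd(H)>1$. Then for every integer $n\geq r$ there exists a balanced $r$-partite graph $G$ on $rn$ vertices with $\delta^*(G)\geq \left(1-\frac{1}{\chi^*(H)}\right)n-1=\left(1-\frac1r\right)n-1$ that has no perfect $H$-tiling.
   Context: An $H$-tiling in $G$ is a collection of vertex-disjoint copies of $H$ in $G$; it is perfect if it covers every vertex of $G$. For an $r$-partite graph $G$ with vertex classes $V_1,\dots,V_r$, $G$ is balanced if all classes have the same size, and $\delta^*(G)$ is the largest integer $m$ such that for all $i\neq j$ every vertex of $V_i$ has at least $m$ neighbours in $V_j$. For $H$ with $\chi(H)=r$, let $\mathcal C$ be the set of proper $r$-colourings of $H$ with colour classes $X_1^\phi,\dots,X_r^\phi$, and $\mathcal D(H)=\bigcup_{\phi\in\mathcal C}\{|X_i^\phi|-|X_j^\phi|: i,j\in[r]\}$; $\gcd(H)$ is the greatest common divisor of the elements of $\mathcal D(H)$ if $\mathcal D(H)\ne\{0\}$ and $\infty$ otherwise. $\chi^*(H)=\chi(H)$ when $\gcd(H)\neq 1$. *)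

From HB Require Import structures.
From mathcomp Require Import all_boot all_order all_algebra.
Set Implicit Arguments. Unset Strict Implicit. Unset Printing Implicit Defensive.
Import Order.TTheory GRing.Theory Num.Theory.

Definition simple_graph (V : finType) (e : rel V) : Prop :=
  symmetric e /\ irreflexive e.

Definition proper_col (V : finType) (e : rel V) (k : nat) (c : V -> 'I_k) : Prop :=
  forall x y, e x y -> c x != c y.

Definition colorable (V : finType) (e : rel V) (k : nat) : Prop :=
  exists c : V -> 'I_k, proper_col e c.

Definition chromatic_number_eq (V : finType) (e : rel V) (r : nat) : Prop :=
  colorable e r /\ ~ colorable e r.-1.

Definition proper_colb (V : finType) (e : rel V) (r : nat) (c : {ffun V -> 'I_r}) : bool :=
  [forall x, forall y, e x y ==> (c x != c y)].

Definition col_class (V : finType) (r : nat) (c : {ffun V -> 'I_r}) (i : 'I_r) : {set V} :=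
  [set x | c x == i].

(* gcd(H), with the convention that the value 0 encodes "infinity"
   (i.e. D(H) = {0}).  The gcd of the integer differences |X_i|-|X_j| over all
   proper r-colourings and all i, j equals the gcd of their absolute values;
   since both (i,j) and (j,i) occur, the truncated nat subtraction
   #|X_i| - #|X_j| over all ordered pairs yields exactly all |X_i|-|X_j|
   absolute values plus zeros (zeros do not change a gcd). *)
Definition gcdH (V : finType) (e : rel V) (r : nat) : nat :=
  \big[gcdn/0]_(c : {ffun V -> 'I_r} | proper_colb e c)
    \big[gcdn/0]_(i : 'I_r) \big[gcdn/0]_(j : 'I_r)
       (#|col_class c i| - #|col_class c j|).

(* Balanced r-partite graph on vertex set 'I_r * 'I_n, with classes
   V_i = {(i, t) | t : 'I_n}: no edges inside a class. *)
Definition balanced_rpartite (r n : nat) (eG : rel ('I_r * 'I_n)) : Prop :=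
  simple_graph eG /\ forall u v : 'I_r * 'I_n, u.1 = v.1 -> ~~ eG u v.

Definition deg_in (r n : nat) (eG : rel ('I_r * 'I_n)) (v : 'I_r * 'I_n) (j : 'I_r) : nat :=
  #|[set u : 'I_r * 'I_n | (u.1 == j) && eG v u]|.

(* delta*(G) >= x  (x rational): every vertex of V_i has at least x neighbours in
   V_j, for all i <> j. *)
Definition min_cross_deg_ge (r n : nat) (eG : rel ('I_r * 'I_n)) (x : rat) : Prop :=
  forall (v : 'I_r * 'I_n) (j : 'I_r), v.1 != j -> (x <= ((deg_in eG v j)%:R : rat))%R.

Definition H_copy (V W : finType) (e : rel V) (eG : rel W) (f : V -> W) : Prop :=
  injective f /\ forall x y, e x y -> eG (f x) (f y).

Definition perfect_tiling (V W : finType) (e : rel V) (eG : rel W) : Prop :=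
  exists (k : nat) (f : 'I_k -> V -> W),
    (forall t, H_copy e eG (f t)) /\
    (forall t t' x y, t != t' -> f t x != f t' y) /\
    (forall w, exists t x, f t x = w).

From HB Require Import structures.
From mathcomp Require Import all_boot all_order all_algebra zify lra.
Import Order.TTheory GRing.Theory Num.Theory.

Set Implicit Arguments.
Unset Strict Implicit.
Unset Printing Implicit Defensive.

(* Label the vertex (i, t) of the balanced r-partite vertex set by i + t mod r,
   except that (0, 0) gets label r - 1, and join vertices of different classes
   with different labels.  In class j the vertices of a fixed label lie in one
   residue class of t mod r (plus possibly t = 0), so every vertex misses at
   most n/r + 1 vertices of any other class.  The labelling is a proper
   r-colouring of G that uses label r - 1 exactly n + 1 times and label 1
   exactly n times (r >= 3 keeps 0, 1 and r - 1 apart).  Each copy of H in G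
   inherits a proper r-colouring, whose classes 1 and r - 1 have sizes
   congruent modulo gcd(H); summing over a perfect tiling would give
   n + 1 = n (mod gcd(H)), which is impossible when gcd(H) <> 1. *)

Lemma card_residue_class_le (n d k m : nat) : 0 < d ->
  (forall t, t < n -> t %% d = k -> t %/ d < m) ->
  #|[set t : 'I_n | t %% d == k]| <= m.
Proof.
move=> d_gt0 quo_lt_m.
rewrite cardE -(size_map (fun t : 'I_n => t %/ d)) -[m in _ <= m](size_iota 0).
apply: uniq_leq_size.
  rewrite map_inj_in_uniq ?enum_uniq // => t t'.
  rewrite !mem_enum !inE => /eqP tk /eqP t'k eq_quo; apply: val_inj.
  by rewrite /= (divn_eq t d) (divn_eq t' d) tk t'k eq_quo.
move=> q /mapP [t]; rewrite mem_enum inE => /eqP tk ->.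
by rewrite mem_iota add0n; exact: quo_lt_m.
Qed.

Lemma card_residue_le (n d k : nat) : 0 < d ->
  #|[set t : 'I_n | t %% d == k]| <= (n %/ d).+1.
Proof.
move=> d_gt0; apply: card_residue_class_le => // t t_lt_n _.
by rewrite ltnS leq_div2r // ltnW.
Qed.

Lemma card_residue_last_le (n d : nat) : 0 < d ->
  #|[set t : 'I_n | t %% d == d.-1]| <= n %/ d.
Proof.
move=> d_gt0; apply: card_residue_class_le => // t t_lt_n t_last.
rewrite leq_divRL // mulSn; have := divn_eq t d; rewrite t_last; lia.
Qed.

Lemma big_gcdn_dvd (I : finType) (P : pred I) (F : I -> nat) i :
  P i -> \big[gcdn/0]_(j | P j) F j %| F i.
Proof. by move=> Pi; rewrite (bigD1 i) //= dvdn_gcdl. Qed.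

Lemma gcdH_col_class_congr (V : finType) (e : rel V) (r : nat) (c : V -> 'I_r)
    (i j : 'I_r) : proper_col e c ->
  \sum_x (c x == i : nat) = \sum_x (c x == j : nat) %[mod gcdH e r].
Proof.
move=> c_proper; pose cf : {ffun V -> 'I_r} := [ffun x => c x].
have cf_proper : proper_colb e cf.
  by apply/forallP=> x; apply/forallP=> y; apply/implyP=> /c_proper; rewrite !ffunE.
have card_class l : #|col_class cf l| = \sum_x (c x == l : nat).
  rewrite -sum1_card big_mkcond /=; apply: eq_bigr => x _.
  by rewrite inE ffunE; case: (_ == _).
have dvd_diff l l' : gcdH e r %| #|col_class cf l| - #|col_class cf l'|.
  rewrite /gcdH; apply: dvdn_trans (big_gcdn_dvd _ cf_proper) _.
  apply: dvdn_trans (big_gcdn_dvd (P := xpredT) _ (erefl true : xpredT l)) _.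
  exact: (big_gcdn_dvd (P := xpredT) _ (erefl true : xpredT l')).
rewrite -!card_class; apply/eqP.
have [le_ij | lt_ji] := leqP #|col_class cf i| #|col_class cf j|.
  by rewrite eq_sym eqn_mod_dvd.
by rewrite eqn_mod_dvd // ltnW.
Qed.

Lemma perfect_tiling_sum (V W : finType) (e : rel V) (eG : rel W) (k : nat)
    (f : 'I_k -> V -> W) (F : W -> nat) :
  (forall t, H_copy e eG (f t)) ->
  (forall t t' x y, t != t' -> f t x != f t' y) ->
  (forall w, exists t x, f t x = w) ->
  \sum_w F w = \sum_t \sum_x F (f t x).
Proof.
move=> copy_f disj_f cover_f; pose h (tx : 'I_k * V) := f tx.1 tx.2.
have h_inj : {in [set: 'I_k * V] &, injective h}.
  move=> [t x] [t' y] _ _; rewrite /h /=.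
  have [<- | neq_tt'] := eqVneq t t'; first by case: (copy_f t) => f_inj _ /f_inj ->.
  by move=> eq_f; move: (disj_f _ _ x y neq_tt'); rewrite eq_f eqxx.
have h_onto : h @: [set: 'I_k * V] = [set: W].
  apply/setP=> w; rewrite !inE; have [t [x <-]] := cover_f w.
  by apply/imsetP; exists (t, x); rewrite ?inE.
have -> : \sum_w F w = \sum_(w in h @: [set: 'I_k * V]) F w.
  by rewrite h_onto; apply: eq_bigl => w; rewrite inE.
rewrite big_imset //= (eq_bigl xpredT); last by move=> tx; rewrite inE.
by rewrite -(pair_bigA _ (fun t x => F (f t x))).
Qed.

Lemma min_cross_deg_rat (r n d : nat) : 0 < r -> n <= d + (n %/ r).+1 ->
  ((1 - 1 / (r%:R : rat)) * n%:R - 1 <= d%:R)%R.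
Proof.
move=> r_gt0 n_le.
have quo_le : ((n %/ r)%:R <= (n%:R : rat) / r%:R)%R.
  by rewrite ler_pdivlMr ?ltr0n // -natrM ler_nat leq_divM.
have n_le_rat : (n%:R <= d%:R + (n %/ r)%:R + 1 :> rat)%R.
  by rewrite -natrD natr1 ler_nat -addnS.
rewrite mulrBl !mul1r mulrC; lra.
Qed.

Section LabelGraph.
Variables p n : nat.
Local Notation r := p.+1.
Local Notation vertex := ('I_r * 'I_n)%type.

Definition residue_label (u : vertex) : 'I_r := (u.1 + inZp u.2)%R.

Definition label (u : vertex) : 'I_r :=
  if (u.1 == 0%R) && (val u.2 == 0) then ord_max else residue_label u.

Definition label_graph (u v : vertex) : bool :=
  (u.1 != v.1) && (label u != label v).

Lemma label_graph_balanced : balanced_rpartite label_graph.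
Proof.
split; last by move=> u v eq_class; rewrite /label_graph eq_class eqxx.
split=> [u v | u]; last by rewrite /label_graph eqxx.
by rewrite /label_graph eq_sym [label v == _]eq_sym.
Qed.

Lemma residue_label_eq (j : 'I_r) (t : 'I_n) (c : 'I_r) :
  (residue_label (j, t) == c) = (t %% r == val (c - j)%R).
Proof.
by rewrite /residue_label addrC eq_sym -subr_eq eq_sym -(inj_eq val_inj).
Qed.

Lemma card_label_fiber (j c : 'I_r) :
  #|[set t : 'I_n | label (j, t) == c]| <= (n %/ r).+1.
Proof.
have [j0 | j_neq0] := eqVneq j 0%R; last first.
  apply: leq_trans (card_residue_le n (val (c - j)%R) (ltn0Sn p)).
  apply: subset_leq_card; apply/subsetP=> t.
  by rewrite !inE /label (negbTE j_neq0) residue_label_eq.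
have [c_max | c_neq_max] := eqVneq c ord_max; last first.
  apply: leq_trans (card_residue_le n (val (c - j)%R) (ltn0Sn p)).
  apply: subset_leq_card; apply/subsetP=> t; rewrite !inE /label j0 /=.
  case: ifP => [_ /eqP max_c | _]; last by rewrite residue_label_eq.
  by rewrite max_c eqxx in c_neq_max.
have fiber_sub : [set t : 'I_n | label (j, t) == c]
    \subset [set t : 'I_n | val t == 0] :|: [set t : 'I_n | t %% r == r.-1].
  apply/subsetP=> t; rewrite !inE /label j0 c_max /=.
  by have [-> // | _] := eqVneq (val t) 0; rewrite residue_label_eq subr0.
apply: leq_trans (subset_leq_card fiber_sub) _.
apply: leq_trans (leq_card_setU _ _) _.
apply: (@leq_add _ _ 1 (n %/ r)); last exact: card_residue_last_le.
apply/card_le1_eqP=> t t'; rewrite !inE => /eqP t0 /eqP t'0.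
by apply: val_inj; rewrite /= t0 t'0.
Qed.

Lemma label_graph_cross_deg (v : vertex) (j : 'I_r) : v.1 != j ->
  n <= deg_in label_graph v j + (n %/ r).+1.
Proof.
move=> v_j; set A := [set t : 'I_n | label (j, t) == label v].
have card_compl : #|A| + #|~: A| = n by rewrite cardsC card_ord.
have compl_le_deg : #|~: A| <= deg_in label_graph v j.
  rewrite -(@card_imset _ _ (pair j) (mem (~: A))); last by move=> a b [].
  apply: subset_leq_card; apply/subsetP=> u /imsetP [t]; rewrite !inE => t_notA ->.
  by rewrite /= eqxx /label_graph /= v_j eq_sym.
have := card_label_fiber j (label v); rewrite -/A; lia.
Qed.

Lemma label_graph_proper (V : finType) (e : rel V) (f : V -> vertex) :
  H_copy e label_graph f -> proper_col e (label \o f).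
Proof. by case=> _ f_edge x y /f_edge /andP []. Qed.

Lemma sum_residue_label (c : 'I_r) :
  \sum_(u : vertex) (residue_label u == c : nat) = n.
Proof.
rewrite -(pair_bigA _ (fun i t => (residue_label (i, t) == c : nat))) exchange_big /=.
rewrite (eq_bigr (fun _ => 1)) ?sum_nat_const ?card_ord ?muln1 // => t _.
rewrite (bigD1 (c - inZp t)%R) //= /residue_label /= subrK eqxx big1 // => i i_neq.
by apply/eqP; rewrite eqb0; apply: contra i_neq => /eqP <-; rewrite addrK.
Qed.

Section Counts.
Hypothesis n_gt0 : 0 < n.
Let corner : vertex := (0%R, Ordinal n_gt0).

Lemma label_eq_residue_label (u : vertex) : u != corner -> label u = residue_label u.
Proof.
rewrite /label; case: ifP => // /andP [/eqP u1 /eqP u2].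
by case/eqP; case: u u1 u2 => i t /= -> u2; congr pair; apply: val_inj.
Qed.

(* The relabelling of the corner moves one vertex from label 0 to label r - 1. *)
Lemma sum_label (c : 'I_r) :
  \sum_(u : vertex) (label u == c : nat) + (0%R == c :> 'I_r) = n + (ord_max == c).
Proof.
have corner_residue : residue_label corner = 0%R.
  by rewrite /residue_label /= add0r; apply: val_inj; rewrite /= mod0n.
have label_corner : label corner = ord_max by [].
have := sum_residue_label c.
rewrite [X in X = n -> _](bigD1 corner) // corner_residue.
rewrite [X in _ -> X + _ = _](bigD1 corner) // label_corner.
rewrite [X in _ -> _ + X + _ = _](eq_bigr (fun u => (residue_label u == c : nat))).
  by move=> sum_eq; rewrite -[X in _ = X + _]sum_eq addnAC [RHS]addnC addnA.
by move=> u /label_eq_residue_label ->.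
Qed.

End Counts.
End LabelGraph.

Lemma label_graph_no_perfect_tiling (V : finType) (e : rel V) (p n : nat) :
  1 < p -> 0 < n -> gcdH e p.+1 != 1 -> ~ perfect_tiling e (@label_graph p n).
Proof.
move=> p_gt1 n_gt0 gcd_neq1 [k [f [copy_f [disj_f cover_f]]]].
pose one : 'I_p.+1 := inZp 1.
have one_val : val one = 1 by rewrite /= modn_small // ltnS ltnW.
have [zero_max zero_one max_one] : [/\ (0%R == ord_max :> 'I_p.+1) = false,
    (0%R == one) = false & (ord_max == one) = false].
  by rewrite -!(inj_eq val_inj) one_val /=; split; apply/negbTE/eqP; lia.
have count_max : \sum_(u : 'I_p.+1 * 'I_n) (label u == ord_max : nat) = n.+1.
  by have := sum_label (p := p) n_gt0 ord_max; rewrite zero_max eqxx addn0 addn1.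
have count_one : \sum_(u : 'I_p.+1 * 'I_n) (label u == one : nat) = n.
  by have := sum_label (p := p) n_gt0 one; rewrite zero_one max_one !addn0.
have sum_tiles c : \sum_(u : 'I_p.+1 * 'I_n) (label u == c : nat)
    = \sum_t \sum_x (label (f t x) == c : nat).
  exact: (perfect_tiling_sum (fun u => (label u == c : nat)) copy_f disj_f cover_f).
have counts_congr : \sum_(u : 'I_p.+1 * 'I_n) (label u == ord_max : nat)
    = \sum_(u : 'I_p.+1 * 'I_n) (label u == one : nat) %[mod gcdH e p.+1].
  rewrite !sum_tiles -modn_summ -[RHS]modn_summ; congr (_ %% _).
  by apply: eq_bigr => t _; exact: gcdH_col_class_congr (label_graph_proper (copy_f t)).
move: counts_congr; rewrite count_max count_one => /eqP.
by rewrite eqn_mod_dvd // subSnn dvdn1; exact/negP.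
Qed.

Theorem mainTheorem8 (V : finType) (e : rel V) (r : nat) :
  simple_graph e ->
  chromatic_number_eq e r ->
  3 <= r ->
  gcdH e r != 1 ->
  forall n : nat, r <= n ->
  exists eG : rel ('I_r * 'I_n),
    balanced_rpartite eG /\
    min_cross_deg_ge eG ((1 - 1 / (r%:R : rat)) * n%:R - 1)%R /\
    ~ perfect_tiling e eG.
Proof.
case: r => [// | p] _ _ p_gt1 gcd_neq1 n r_le_n.
exists (@label_graph p n); split; [exact: label_graph_balanced | split].
  move=> v j v_j; apply: min_cross_deg_rat => //.
  exact: label_graph_cross_deg.
by apply: label_graph_no_perfect_tiling => //; apply: leq_trans r_le_n.
Qed.
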